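(* Let $(A,\mu)$ be a commutative associative algebra (with $\mu(a\otimes b)=a\cdot b$), let $\gamma:A\to A$ be an algebra map and let $D:A\to A$ be a linear map with $D(a\cdot b)=\gamma(a)\cdot D(b)+D(a)\cdot\gamma(b)$ for all $a,b\in A$. Assume moreover that $D\circ\gamma=\gamma\circ D$. Define a new multiplication on $A$ by $a\ast b=a\cdot D(b)$. Then $(A,\ast,\mathrm{id}_A,\gamma)$ is a BiHom-Novikov algebra.
   Context: Work over a field. A BiHom-Novikov algebra is a 4-tuple $(A,\mu,\alpha,\beta)$ with $\mu:A\otimes A\to A$ (written $x\cdot y$) and commuting linear maps $\alpha,\beta:A\to A$ such that for all $x,y,z\in A$: $\alpha(x\cdot y)=\alpha(x)\cdot\alpha(y)$, $\beta(x\cdot y)=\beta(x)\cdot\beta(y)$, $(\beta(x)\cdot\alpha(y))\cdot\beta(z)-\alpha\beta(x)\cdot(\alpha(y)\cdot z)=(\beta(y)\cdot\alpha(x))\cdot\beta(z)-\alpha\beta(y)\cdot(\alpha(x)\cdot z)$, and $(x\cdot\beta(y))\cdot\alpha\beta(z)=(x\cdot\beta(z))\cdot\alpha\beta(y)$. *)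

From HB Require Import structures.
From mathcomp Require Import all_boot all_order all_algebra.
Set Implicit Arguments. Unset Strict Implicit. Unset Printing Implicit Defensive.
Import GRing.Theory.
Local Open Scope ring_scope.

Definition is_linear_map (K : fieldType) (A : lmodType K) (f : A -> A) : Prop :=
  forall (c : K) (x y : A), f (c *: x + y) = c *: f x + f y.

(* A K-bilinear map A x A -> A (i.e. a linear map A (x) A -> A). *)
Definition is_bilinear_map (K : fieldType) (A : lmodType K) (mu : A -> A -> A) : Prop :=
  (forall (c : K) (x y z : A), mu (c *: x + y) z = c *: mu x z + mu y z) /\
  (forall (c : K) (x y z : A), mu x (c *: y + z) = c *: mu x y + mu x z).

Definition is_comm_assoc_algebra (K : fieldType) (A : lmodType K) (mu : A -> A -> A) : Prop :=
  is_bilinear_map mu /\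
  (forall x y : A, mu x y = mu y x) /\
  (forall x y z : A, mu (mu x y) z = mu x (mu y z)).

Definition is_algebra_map (K : fieldType) (A : lmodType K) (mu : A -> A -> A) (g : A -> A) : Prop :=
  is_linear_map g /\ (forall x y : A, g (mu x y) = mu (g x) (g y)).

Definition BiHomNovikov (K : fieldType) (A : lmodType K) (mu : A -> A -> A)
    (alpha beta : A -> A) : Prop :=
  is_bilinear_map mu /\ is_linear_map alpha /\ is_linear_map beta /\
  (forall x : A, alpha (beta x) = beta (alpha x)) /\
  (forall x y : A, alpha (mu x y) = mu (alpha x) (alpha y)) /\
  (forall x y : A, beta (mu x y) = mu (beta x) (beta y)) /\
  (forall x y z : A,
      mu (mu (beta x) (alpha y)) (beta z) - mu (alpha (beta x)) (mu (alpha y) z)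
    = mu (mu (beta y) (alpha x)) (beta z) - mu (alpha (beta y)) (mu (alpha x) z)) /\
  (forall x y z : A,
      mu (mu x (beta y)) (alpha (beta z)) = mu (mu x (beta z)) (alpha (beta y))).

From HB Require Import structures.
From mathcomp Require Import all_boot all_order all_algebra.
Set Implicit Arguments. Unset Strict Implicit. Unset Printing Implicit Defensive.
Local Open Scope ring_scope.
Import GRing.Theory.

(* Expanding with the twisted Leibniz rule and
   D gamma = gamma D, the left BiHom-Novikov identity has both sides of the form
   -gamma(x) gamma(y) D^2(z), and the right one x D(gamma y) D(gamma z); both
   are symmetric in the swapped variables since mu is commutative and
   associative. *)

Section BilinearCompr.
Variables (K : fieldType) (A : lmodType K) (mu : A -> A -> A) (D : A -> A).
Hypotheses (mu_bilinear : is_bilinear_map mu) (D_linear : is_linear_map D).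

Lemma bilinear_compr : is_bilinear_map (fun a b => mu a (D b)).
Proof.
case: mu_bilinear => mu_linl mu_linr.
by split=> c x y z; [apply: mu_linl | rewrite D_linear mu_linr].
Qed.

End BilinearCompr.

Section DerivationProduct.
Variables (K : fieldType) (A : lmodType K) (mu : A -> A -> A).
Variables gamma D : A -> A.
Hypothesis mu_bilinear : is_bilinear_map mu.
Hypothesis mulC : forall x y : A, mu x y = mu y x.
Hypothesis mulA : forall x y z : A, mu (mu x y) z = mu x (mu y z).
Hypothesis D_derivation :
  forall a b : A, D (mu a b) = mu (gamma a) (D b) + mu (D a) (gamma b).
Hypothesis D_gamma : forall a : A, D (gamma a) = gamma (D a).

Local Notation "a ** b" := (mu a (D b)) (at level 40, left associativity).

Lemma mul_addr (x y z : A) : mu x (y + z) = mu x y + mu x z.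
Proof.
move: mu_bilinear => [_ mu_linr].
by rewrite -[y]scale1r mu_linr !scale1r.
Qed.

Lemma mul_left_comm (x y z : A) : mu x (mu y z) = mu y (mu x z).
Proof. by rewrite -mulA [mu x y]mulC mulA. Qed.

Lemma derivation_product_left_assoc (x y z : A) :
  gamma x ** y ** gamma z - gamma x ** (y ** z)
  = - mu (gamma x) (mu (gamma y) (D (D z))).
Proof.
rewrite D_derivation mul_addr D_gamma !mulA.
by rewrite opprD addrCA subrr addr0.
Qed.

End DerivationProduct.

Theorem proposition2p11 (K : fieldType) (A : lmodType K) (mu : A -> A -> A)
    (gamma D : A -> A) :
  is_comm_assoc_algebra mu ->
  is_algebra_map mu gamma ->
  is_linear_map D ->
  (forall a b : A, D (mu a b) = mu (gamma a) (D b) + mu (D a) (gamma b)) ->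
  (forall a : A, D (gamma a) = gamma (D a)) ->
  BiHomNovikov (fun a b => mu a (D b)) id gamma.
Proof.
move=> [mu_bilinear [mulC mulA]] [gamma_linear gamma_mul] D_linear.
move=> D_derivation D_gamma.
have left_assoc :=
  derivation_product_left_assoc mu_bilinear mulA D_derivation D_gamma.
split; first exact: bilinear_compr mu_bilinear D_linear.
split; first by [].
split; first exact: gamma_linear.
do 2 (split; first by []).
split; first by move=> x y /=; rewrite gamma_mul D_gamma.
split=> x y z /=.
- by rewrite !left_assoc (mul_left_comm mulC mulA (gamma x)).
- by rewrite !mulA (mulC (D (gamma y))).
Qed.
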